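(* Let $\mathcal G$ be a tree on $n\ge2$ nodes, with oriented incidence matrix $D_\tau\in\mathbb R^{n\times(n-1)}$, edge-weight matrix $W=\mathrm{diag}(w_1,\dots,w_{n-1})$, $w_l>0$, and time-scale matrix $E=\mathrm{diag}(\epsilon_1,\dots,\epsilon_n)$, $\epsilon_i>0$; let $L_{e,s}^\tau=D_\tau^TE^{-1}D_\tau$ and $\sigma_w,\sigma_v$ real scalars. Consider $$\tilde\Sigma_\tau(s)=\big(sI+L_{e,s}^\tau W\big)^{-1}\begin{bmatrix}\sigma_wD_\tau^TE^{-1/2} & -\sigma_vL_{e,s}^\tau W^{1/2}\end{bmatrix}.$$ Then $L\le\|\tilde\Sigma_\tau\|_\infty^2\le U$, where $L=\max\{L_1,L_2\}$ and $$L_1=\frac{\sigma_w^2+\sigma_v^2\lambda_{\min}(L_{e,s}^\tau)\lambda_{\max}(W^{1/2})^2}{\lambda_{\min}(L_{e,s}^\tau)\lambda_{\max}(W^{1/2})^4},$$ $$L_2=\frac{\sigma_w^2+\sigma_v^2\lambda_{\max}(L_{e,s}^\tau)\lambda_{\max}(W^{1/2})\lambda_{\min}(W^{1/2})}{\lambda_{\max}(L_{e,s}^\tau)\lambda_{\max}(W^{1/2})^3\lambda_{\min}(W^{1/2})},$$ $$U=\frac{\sigma_w^2+\sigma_v^2\lambda_{\min}(L_{e,s}^\tau)\lambda_{\min}(W^{1/2})^2}{\lambda_{\min}(L_{e,s}^\tau)\lambda_{\min}(W^{1/2})^4}.$$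
   Context: The incidence matrix of a graph with an arbitrary orientation of each edge has entry $1$ in row $i$, column $l$ if node $i$ is the initial node of edge $l$, $-1$ if it is the terminal node, and $0$ otherwise. Powers of positive diagonal matrices are taken entrywise. $\lambda_{\max},\lambda_{\min}$ denote the largest and smallest eigenvalues of a symmetric matrix. For a stable transfer matrix $\Phi(s)$, $\|\Phi\|_\infty=\sup_{\omega\in\mathbb R}\bar\sigma(\Phi(j\omega))$ where $\bar\sigma$ is the largest singular value. *)

From HB Require Import structures.
From mathcomp Require Import all_boot all_order all_algebra.
From mathcomp Require Import classical_sets boolp reals.
From mathcomp Require Import Rstruct.
From mathcomp Require Import complex.
From Stdlib Require Import Reals.
Set Implicit Arguments. Unset Strict Implicit. Unset Printing Implicit Defensive.
Import Order.TTheory GRing.Theory Num.Theory.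
Local Open Scope ring_scope.
Local Open Scope classical_set_scope.

Notation Rl := Rdefinitions.R.

Definition incidence (n m : nat) (src dst : 'I_m -> 'I_n) : 'M[Rl]_(n, m) :=
  \matrix_(i < n, l < m)
    (if i == src l then 1 else if i == dst l then -1 else 0).

Definition adj (n m : nat) (src dst : 'I_m -> 'I_n) : rel 'I_n :=
  fun i j => [exists l, ((src l == i) && (dst l == j)) || ((src l == j) && (dst l == i))].

(* The graph on nodes 'I_n with the n-1 edges (src l, dst l), l : 'I_n.-1,
   is a tree: no self loops and connected (a connected graph with n nodes
   and n-1 edges is a tree). *)
Definition is_oriented_tree (n : nat) (src dst : 'I_n.-1 -> 'I_n) : Prop :=
  (forall l, src l != dst l) /\ (forall i j : 'I_n, connect (adj src dst) i j).

Definition lambda_max (k : nat) (A : 'M[Rl]_k) : Rl := sup [set a | eigenvalue A a].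
Definition lambda_min (k : nat) (A : 'M[Rl]_k) : Rl := inf [set a | eigenvalue A a].

Definition cmx (p q : nat) (A : 'M[Rl]_(p, q)) : 'M[Rl[i]]_(p, q) :=
  map_mx (fun x => x%:C%C) A.
Definition ctrmx (p q : nat) (M : 'M[Rl[i]]_(p, q)) : 'M[Rl[i]]_(q, p) :=
  (map_mx (@conjc Rl) M)^T.

Definition sigma_max (p q : nat) (M : 'M[Rl[i]]_(p, q)) : Rl :=
  sup [set s : Rl | 0 <= s /\ eigenvalue (M *m ctrmx M) ((s ^+ 2)%:C%C)].

Definition diagR (k : nat) (d : 'I_k -> Rl) : 'M[Rl]_k := diag_mx (\row_i d i).

Section Model.
Variables (n : nat) (src dst : 'I_n.-1 -> 'I_n) (w : 'I_n.-1 -> Rl)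
  (eps : 'I_n -> Rl) (sw sv : Rl).

Definition Dtau : 'M[Rl]_(n, n.-1) := incidence src dst.
Definition Wm : 'M[Rl]_(n.-1) := diagR w.
Definition Whalf : 'M[Rl]_(n.-1) := diagR (fun l => Num.sqrt (w l)).
Definition Einv : 'M[Rl]_n := diagR (fun i => (eps i)^-1).
Definition Einvhalf : 'M[Rl]_n := diagR (fun i => (Num.sqrt (eps i))^-1).
Definition Les : 'M[Rl]_(n.-1) := Dtau^T *m Einv *m Dtau.

Definition Sigma_tau (om : Rl) : 'M[Rl[i]]_(n.-1, n + n.-1) :=
  invmx ((0 +i* om)%C%:M + cmx (Les *m Wm))
  *m cmx (row_mx (sw *: (Dtau^T *m Einvhalf)) (- sv *: (Les *m Whalf))).

Definition Hinf_set : set Rl := [set sigma_max (Sigma_tau om) | om in setT].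
Definition Hinf_norm : Rl := sup Hinf_set.
End Model.

(* Row vectors are used throughout, so the system acts as [y |-> y Sigma(jw)], and
   [sigma_max M ^ 2] is the best constant in [|y M|^2 <= c |y|^2] (Rayleigh quotients of
   the hermitian matrix [M M^H], diagonalised by the spectral theorem).
   Upper bound: with [S = W^1/2 L W^1/2], the similarity [W^1/2 (jw + L W) = (jw + S) W^1/2]
   lets us write [y = t (jw + S) W^1/2]; then [|y Sigma|^2 = sw^2 <tS,t> + sv^2 |tS|^2]
   while [|y|^2 >= wmin^2 (w^2 |t|^2 + |tS|^2)], and [S >= lmin wmin^2] gives
   [lmin wmin^2 <tS,t> <= |tS|^2], whence [|y Sigma|^2 <= U |y|^2] for every [w].
   Lower bounds: at [w = 0], [Sigma(0) = (L W)^-1 B]; testing it on [y = v W] with [v] an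
   eigenvector of [L] for [lmin] gives [L1], and on the coordinate vector of a lightest
   edge gives [L2], using [|tL|^2 <= lmax <tL,t>].  The connectivity of the tree makes
   [D] of full column rank, hence [lmin > 0]. *)

From mathcomp Require Import all_boot all_order all_algebra.
From mathcomp Require Import classical_sets boolp reals Rstruct complex.
From mathcomp Require Import ring lra.
Import Order.TTheory GRing.Theory Num.Theory.
Set Implicit Arguments. Unset Strict Implicit. Unset Printing Implicit Defensive.
Local Open Scope ring_scope.
Local Open Scope complex_scope.

Local Notation C := (Rl[i]).

Definition cnorm2 (a : C) : Rl := complex.Re a ^+ 2 + complex.Im a ^+ 2.

Lemma cnorm2_ge0 (a : C) : 0 <= cnorm2 a.
Proof. by rewrite addr_ge0 ?sqr_ge0. Qed.

Lemma cnorm2_eq0 (a : C) : (cnorm2 a == 0) = (a == 0).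
Proof.
rewrite paddr_eq0 ?sqr_ge0 // !sqrf_eq0.
by case: a => x y; rewrite eq_complex.
Qed.

Lemma ReD (a b : C) : complex.Re (a + b) = complex.Re a + complex.Re b.
Proof. exact: (raddfD (@complex.Re Rl : Rcomplex Rl -> Rl)). Qed.

Lemma Re_sum I (r : seq I) (P : pred I) (F : I -> C) :
  complex.Re (\sum_(i <- r | P i) F i) = \sum_(i <- r | P i) complex.Re (F i).
Proof. exact: (raddf_sum (@complex.Re Rl : Rcomplex Rl -> Rl)). Qed.

Lemma Re_realM (r : Rl) (a : C) : complex.Re (r%:C * a) = r * complex.Re a.
Proof. by case: a => x y /=; rewrite mul0r subr0. Qed.

Lemma Re_conjc (a : C) : complex.Re a^* = complex.Re a.
Proof. by case: a. Qed.

Lemma Re_mulcJ (a : C) : complex.Re (a * a^*) = cnorm2 a.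
Proof. by case: a => x y; rewrite /cnorm2 /= !expr2; lra. Qed.

Lemma Re_imag_mulJ (om : Rl) (a : C) :
  complex.Re ((0 +i* om) * a^*) = - complex.Re ((0 +i* om) * a).
Proof. by case: a => x y /=; lra. Qed.

Lemma imag_mulJ (om : Rl) : (0 +i* om) * (0 +i* om)^* = (om ^+ 2)%:C.
Proof. by rewrite /= expr2; congr (_ +i* _); lra. Qed.

Lemma ctrmx_mul p q r (A : 'M[C]_(p, q)) (B : 'M[C]_(q, r)) :
  ctrmx (A *m B) = ctrmx B *m ctrmx A.
Proof. by rewrite /ctrmx (map_mxM (@conjc Rl)) trmx_mul. Qed.

Lemma ctrmxK p q (A : 'M[C]_(p, q)) : ctrmx (ctrmx A) = A.
Proof. by apply/matrixP => i j; rewrite !mxE; case: (A i j) => x y /=; rewrite opprK. Qed.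

Lemma ctrmxZ p q (c : C) (A : 'M[C]_(p, q)) : ctrmx (c *: A) = c^* *: ctrmx A.
Proof. by rewrite /ctrmx map_mxZ linearZ. Qed.

Lemma ctrmx_cmx p q (A : 'M[Rl]_(p, q)) : ctrmx (cmx A) = cmx A^T.
Proof. by apply/matrixP => i j; rewrite !mxE conjc_real. Qed.

Lemma cmxM p q r (A : 'M[Rl]_(p, q)) (B : 'M[Rl]_(q, r)) :
  cmx (A *m B) = cmx A *m cmx B.
Proof. exact: map_mxM. Qed.

Lemma cmxZ p q (c : Rl) (A : 'M[Rl]_(p, q)) : cmx (c *: A) = c%:C *: cmx A.
Proof. exact: map_mxZ. Qed.

Lemma cmx_row_mx p q1 q2 (A : 'M[Rl]_(p, q1)) (B : 'M[Rl]_(p, q2)) :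
  cmx (row_mx A B) = row_mx (cmx A) (cmx B).
Proof. exact: map_row_mx. Qed.

Lemma cmx_diagR k (d : 'I_k -> Rl) : cmx (diagR d) = diag_mx (\row_i (d i)%:C).
Proof. by rewrite /cmx map_diag_mx; congr diag_mx; apply/rowP => i; rewrite !mxE. Qed.

Lemma diagRM k (d e : 'I_k -> Rl) : diagR d *m diagR e = diagR (fun i => d i * e i).
Proof. by rewrite /diagR mulmx_diag; congr diag_mx; apply/rowP => i; rewrite !mxE. Qed.

Lemma eigenvalue_cmx k (A : 'M[Rl]_k) (a : Rl) :
  eigenvalue (cmx A) a%:C = eigenvalue A a.
Proof.
by rewrite !eigenvalue_root_char -map_char_poly fmorph_root.
Qed.

Definition cdot k (x y : 'rV[C]_k) : C := (x *m ctrmx y) 0 0.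
Definition rdot k (x y : 'rV[C]_k) : Rl := complex.Re (cdot x y).

Lemma cdotE k (x y : 'rV[C]_k) : cdot x y = \sum_i x 0 i * (y 0 i)^*.
Proof. by rewrite /cdot mxE; apply: eq_bigr => i _; rewrite !mxE. Qed.

Lemma cdotC k (x y : 'rV[C]_k) : cdot y x = (cdot x y)^*.
Proof.
rewrite !cdotE rmorph_sum; apply: eq_bigr => i _.
by rewrite rmorphM /= conjcK mulrC.
Qed.

Lemma cdotZl k (c : C) (x y : 'rV[C]_k) : cdot (c *: x) y = c * cdot x y.
Proof. by rewrite /cdot -scalemxAl mxE. Qed.

Lemma cdotZr k (c : C) (x y : 'rV[C]_k) : cdot x (c *: y) = c^* * cdot x y.
Proof. by rewrite /cdot ctrmxZ -scalemxAr mxE. Qed.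

Section RealInnerProduct.
Variable k : nat.
Implicit Types x y : 'rV[C]_k.

Lemma rdotC x y : rdot y x = rdot x y.
Proof. by rewrite /rdot cdotC Re_conjc. Qed.

Lemma rdotDl x1 x2 y : rdot (x1 + x2) y = rdot x1 y + rdot x2 y.
Proof. by rewrite /rdot /cdot mulmxDl mxE ReD. Qed.

Lemma rdotDr x y1 y2 : rdot x (y1 + y2) = rdot x y1 + rdot x y2.
Proof. by rewrite ![rdot x _]rdotC rdotDl. Qed.

Lemma rdotZl (c : Rl) x y : rdot (c%:C *: x) y = c * rdot x y.
Proof. by rewrite /rdot cdotZl Re_realM. Qed.

Lemma rdotZr (c : Rl) x y : rdot x (c%:C *: y) = c * rdot x y.
Proof. by rewrite ![rdot x _]rdotC rdotZl. Qed.

Lemma rdot0l y : rdot 0 y = 0.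
Proof. by rewrite /rdot /cdot mul0mx mxE. Qed.

Lemma rdot_mulmx l x (A : 'M[C]_(k, l)) (y : 'rV[C]_l) :
  rdot (x *m A) y = rdot x (y *m ctrmx A).
Proof. by rewrite /rdot /cdot ctrmx_mul ctrmxK mulmxA. Qed.

Lemma rdotE x : rdot x x = \sum_i cnorm2 (x 0 i).
Proof. by rewrite /rdot cdotE Re_sum; apply: eq_bigr => i _; rewrite Re_mulcJ. Qed.

Lemma rdot_ge0 x : 0 <= rdot x x.
Proof. by rewrite rdotE sumr_ge0 // => i _; apply: cnorm2_ge0. Qed.

Lemma rdot_gt0 x : x != 0 -> 0 < rdot x x.
Proof.
move=> xn0; rewrite lt_def rdot_ge0 andbT; apply: contra xn0.
rewrite rdotE psumr_eq0 => [/allP x0|i _]; last exact: cnorm2_ge0.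
apply/eqP/rowP => i; rewrite mxE; apply/eqP.
by rewrite -cnorm2_eq0; apply: x0; rewrite mem_index_enum.
Qed.

Lemma rdot_scale2 (c : Rl) x : rdot (c%:C *: x) (c%:C *: x) = c ^+ 2 * rdot x x.
Proof. by rewrite rdotZl rdotZr mulrA expr2. Qed.

Lemma rdot_imag_skew (om : Rl) x y :
  rdot ((0 +i* om) *: x) y = - rdot ((0 +i* om) *: y) x.
Proof. by rewrite /rdot !cdotZl (cdotC y) Re_imag_mulJ. Qed.

Lemma rdot_imag_self (om : Rl) x : rdot ((0 +i* om) *: x) x = 0.
Proof. by have := rdot_imag_skew om x x; lra. Qed.

Lemma rdot_imag2 (om : Rl) x :
  rdot ((0 +i* om) *: x) ((0 +i* om) *: x) = om ^+ 2 * rdot x x.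
Proof.
by rewrite /rdot cdotZl cdotZr mulrA imag_mulJ Re_realM.
Qed.

Lemma rdot_diagR (d : 'I_k -> Rl) x :
  rdot (x *m cmx (diagR d)) x = \sum_i d i * cnorm2 (x 0 i).
Proof.
rewrite /rdot cdotE Re_sum; apply: eq_bigr => i _.
by rewrite cmx_diagR mul_mx_diag !mxE mulrAC mulrC Re_realM Re_mulcJ.
Qed.

Lemma rdot_cmx_sqr l x (M : 'M[Rl]_(k, l)) :
  rdot (x *m cmx M) (x *m cmx M) = rdot (x *m cmx (M *m M^T)) x.
Proof. by rewrite rdot_mulmx ctrmx_cmx -mulmxA -cmxM rdotC. Qed.

Lemma rdot_diagR_sqr (d : 'I_k -> Rl) x :
  rdot (x *m cmx (diagR d)) (x *m cmx (diagR d)) = \sum_i d i ^+ 2 * cnorm2 (x 0 i).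
Proof.
rewrite rdot_cmx_sqr tr_diag_mx diagRM rdot_diagR.
by apply: eq_bigr => i _; rewrite expr2.
Qed.

Lemma rdot_delta (i : 'I_k) : rdot ('e_i : 'rV[C]_k) 'e_i = 1.
Proof.
rewrite rdotE (bigD1 i) //= big1 ?addr0 => [|j ji].
  by rewrite /cnorm2 !mxE !eqxx /= expr1n expr0n addr0.
by rewrite /cnorm2 !mxE (negbTE ji) /= expr0n addr0.
Qed.

(* Expand [|xA - mu x|^2 >= 0]. *)
Lemma rdot_form_le_sqr (A : 'M[C]_k) (mu : Rl) x : 0 <= mu ->
  mu * rdot x x <= rdot (x *m A) x -> mu * rdot (x *m A) x <= rdot (x *m A) (x *m A).
Proof.
move=> mu0 hx; have := rdot_ge0 (x *m A + (- mu)%:C *: x).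
rewrite rdotDl !rdotDr !rdotZl !rdotZr (rdotC (x *m A) x).
have : 0 <= mu * (rdot (x *m A) x - mu * rdot x x) by rewrite mulr_ge0 ?subr_ge0.
nra.
Qed.

End RealInnerProduct.

Lemma rdot_row_mx k1 k2 (a b : 'rV[C]_k1) (c d : 'rV[C]_k2) :
  rdot (row_mx a c) (row_mx b d) = rdot a b + rdot c d.
Proof.
by rewrite /rdot /cdot /ctrmx map_row_mx tr_row_mx mul_row_col mxE ReD.
Qed.

Lemma sup_eq_max (R : realType) (E : set R) (x : R) :
  E x -> ubound E x -> sup E = x.
Proof.
move=> Ex ubx; apply/le_anti/andP; split.
  by apply: ge_sup => //; exists x.
by apply: ub_le_sup => //; exists x.
Qed.

Lemma inf_eq_min (R : realType) (E : set R) (x : R) :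
  E x -> lbound E x -> inf E = x.
Proof.
move=> Ex lbx; apply/le_anti/andP; split.
  by apply: ge_inf => //; exists x.
by apply: lb_le_inf => //; exists x.
Qed.

Lemma rayleigh_eigenvalue_bounds k (A : 'M[C]_k) (lo hi a : Rl) :
  (forall x, lo * rdot x x <= rdot (x *m A) x <= hi * rdot x x) ->
  eigenvalue A a%:C -> lo <= a <= hi.
Proof.
move=> hA /eigenvalueP [v hv vn0].
by have := hA v; rewrite hv rdotZl !(ler_pM2r (rdot_gt0 vn0)).
Qed.

(* Diagonalise [A = P^-1 diag(d) P] with [P] unitary: then [<xA, x> = sum d_i |(xP^H)_i|^2]. *)
Lemma hermitian_rayleigh k (A : 'M[C]_k.+1) : ctrmx A = A ->
  exists lo hi : Rl, [/\ eigenvalue A lo%:C, eigenvalue A hi%:C &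
     forall x, lo * rdot x x <= rdot (x *m A) x <= hi * rdot x x].
Proof.
move=> hA; have herm : A \is hermsymmx.
  rewrite is_hermitianmxE expr0 scale1r; apply/eqP.
  by rewrite -[LHS]hA; apply/matrixP => i j; rewrite !mxE.
have /orthomx_spectralP Adiag := hermitian_normalmx herm.
set P := spectralmx A in Adiag; set d := spectral_diag A in Adiag.
have Punit : P \in unitmx := spectral_unit A.
have Pinv : invmx P = ctrmx P.
  by rewrite invmx_unitary ?spectral_unitarymx //; apply/matrixP => i j; rewrite !mxE.
set dr := fun i => complex.Re (d 0 i).
have d_real : diag_mx d = cmx (diagR dr).
  rewrite cmx_diagR; congr diag_mx; apply/rowP => i; rewrite !mxE.
  have /mxOverP /(_ 0 i) := hermitian_spectral_diag_real herm.
  by rewrite -/d /dr; case: (d 0 i) => a b; rewrite complex_real => /eqP ->.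
have eig i : eigenvalue A (dr i)%:C.
  apply/eigenvalueP; exists (row i P); last first.
    apply/eqP => Pi0; have := congr1 (mulmx^~ (invmx P)) Pi0.
    rewrite /= -row_mul mulmxV // row1 mul0mx => /rowP /(_ i).
    by rewrite !mxE !eqxx => /eqP; rewrite oner_eq0.
  rewrite Adiag !mulmxA -row_mul mulmxV // row1 -rowE row_diag_mx.
  rewrite -scalemxAl -rowE; congr (_ *: _).
  by have /matrixP /(_ i i) := d_real; rewrite cmx_diagR !mxE eqxx !mulr1n.
have [i0 _ min_i0] := @arg_minP _ _ _ ord0 xpredT dr isT.
have [i1 _ max_i1] := @arg_maxP _ _ _ ord0 xpredT dr isT.
exists (dr i0), (dr i1); split => // x.
have -> : rdot (x *m A) x = rdot ((x *m ctrmx P) *m cmx (diagR dr)) (x *m ctrmx P).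
  by rewrite Adiag Pinv d_real !mulmxA rdot_mulmx.
have -> : rdot x x = rdot (x *m ctrmx P) (x *m ctrmx P).
  by rewrite rdot_mulmx ctrmxK -Pinv mulmxKV.
rewrite rdot_diagR rdotE !mulr_sumr.
apply/andP; split; apply: ler_sum => i _; apply: (ler_wpM2r (cnorm2_ge0 _)).
  exact: min_i0.
exact: max_i1.
Qed.

Section SymmetricSpectrum.
Variables (k : nat) (A : 'M[Rl]_k.+1).
Hypothesis symA : A^T = A.

Let rayleigh : exists lo hi : Rl, [/\ eigenvalue A lo, eigenvalue A hi &
  forall x, lo * rdot x x <= rdot (x *m cmx A) x <= hi * rdot x x].
Proof.
have hermA : ctrmx (cmx A) = cmx A by rewrite ctrmx_cmx symA.
have [lo [hi [elo ehi hr]]] := hermitian_rayleigh hermA.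
by exists lo, hi; rewrite -!eigenvalue_cmx.
Qed.

Lemma symmetric_lambda_spec :
  [/\ eigenvalue A (lambda_min A), eigenvalue A (lambda_max A) &
    forall x, lambda_min A * rdot x x <= rdot (x *m cmx A) x <= lambda_max A * rdot x x].
Proof.
have [lo [hi [elo ehi hr]]] := rayleigh.
have bnd b : eigenvalue A b -> lo <= b <= hi.
  by rewrite -eigenvalue_cmx; apply: rayleigh_eigenvalue_bounds.
have -> : lambda_min A = lo by apply: inf_eq_min => // b /bnd /andP [].
have -> : lambda_max A = hi by apply: sup_eq_max => // b /bnd /andP [].
by [].
Qed.

Lemma symmetric_eigenvalue_bounds a :
  eigenvalue A a -> lambda_min A <= a <= lambda_max A.
Proof.
have [_ _ hr] := symmetric_lambda_spec.
by rewrite -eigenvalue_cmx; apply: rayleigh_eigenvalue_bounds.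
Qed.

End SymmetricSpectrum.

Lemma eigenvalue_diagR k (d : 'I_k -> Rl) a :
  eigenvalue (diagR d) a <-> exists i, a = d i.
Proof.
split=> [/eigenvalueP [v hv vn0]|[i ->]]; last first.
  apply/eigenvalueP; exists 'e_i; first by rewrite /diagR -rowE row_diag_mx mxE.
  by apply/eqP => /rowP /(_ i); rewrite !mxE !eqxx => /eqP; rewrite oner_eq0.
have [i vi] : exists i, v 0 i != 0.
  apply/existsP; apply: contraR vn0; rewrite negb_exists => /forallP v0.
  by apply/eqP/rowP => i; rewrite mxE; apply/eqP; rewrite -[_ == _]negbK v0.
exists i; move/rowP: hv => /(_ i); rewrite /diagR mul_mx_diag !mxE => /eqP.
by rewrite mulrC -subr_eq0 -mulrBl mulf_eq0 (negbTE vi) orbF subr_eq0 eq_sym => /eqP.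
Qed.

Lemma diagR_lambda_bounds k (d : 'I_k.+1 -> Rl) j :
  lambda_min (diagR d) <= d j <= lambda_max (diagR d).
Proof.
apply: symmetric_eigenvalue_bounds; first exact: tr_diag_mx.
by apply/eigenvalue_diagR; exists j.
Qed.

Lemma diagR_lambda_min_attained k (d : 'I_k.+1 -> Rl) :
  exists i, lambda_min (diagR d) = d i.
Proof.
by apply/eigenvalue_diagR; have [] := symmetric_lambda_spec (tr_diag_mx (\row_i d i)).
Qed.

Lemma sigma_max_spec k p (M : 'M[C]_(k.+1, p)) :
  [/\ 0 <= sigma_max M,
      forall y, rdot (y *m M) (y *m M) <= sigma_max M ^+ 2 * rdot y y &
      exists2 y, y != 0 & rdot (y *m M) (y *m M) = sigma_max M ^+ 2 * rdot y y].
Proof.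
set H := M *m ctrmx M.
have hermH : ctrmx H = H by rewrite /H ctrmx_mul ctrmxK.
have formH y : rdot (y *m H) y = rdot (y *m M) (y *m M).
  by rewrite /H mulmxA rdot_mulmx ctrmxK.
have [lo [hi [_ ehi hr]]] := hermitian_rayleigh hermH.
have [v hv vn0] := eigenvalueP ehi.
have hv_sqr : rdot (v *m M) (v *m M) = hi * rdot v v by rewrite -formH hv rdotZl.
have hi_ge0 : 0 <= hi.
  by have := rdot_ge0 (v *m M); rewrite hv_sqr pmulr_lge0 ?rdot_gt0.
have -> : sigma_max M = Num.sqrt hi.
  apply: sup_eq_max; first by split; rewrite ?sqrtr_ge0 ?sqr_sqrtr.
  move=> s [s0 /(rayleigh_eigenvalue_bounds hr) /andP [_ s2_le]].
  by rewrite -(ger0_norm s0) -sqrtr_sqr ler_sqrt.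
rewrite sqrtr_ge0 sqr_sqrtr //; split=> // [y|]; last by exists v.
by rewrite -formH; case/andP: (hr y).
Qed.

Lemma sigma_max_sqr_le k p (M : 'M[C]_(k.+1, p)) (c : Rl) :
  (forall y, rdot (y *m M) (y *m M) <= c * rdot y y) -> sigma_max M ^+ 2 <= c.
Proof.
move=> hc; have [_ _ [y yn0 ey]] := sigma_max_spec M.
by have := hc y; rewrite ey ler_pM2r ?rdot_gt0.
Qed.

Lemma sigma_max_sqr_ge k p (M : 'M[C]_(k.+1, p)) (c : Rl) (y : 'rV_k.+1) :
  y != 0 -> c * rdot y y <= rdot (y *m M) (y *m M) -> c <= sigma_max M ^+ 2.
Proof.
move=> yn0 hc; have [_ hM _] := sigma_max_spec M.
by have := le_trans hc (hM y); rewrite ler_pM2r ?rdot_gt0.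
Qed.

Section ImaginaryShift.
Variables (k : nat) (S : 'M[C]_k) (om : Rl).
Implicit Types x : 'rV[C]_k.

Lemma rdot_imag_hermitian x : ctrmx S = S -> rdot ((0 +i* om) *: x) (x *m S) = 0.
Proof.
move=> hS; have := rdot_imag_skew om x (x *m S).
by rewrite scalemxAl rdot_mulmx hS; lra.
Qed.

Lemma rdot_shift_form x : rdot (x *m ((0 +i* om)%:M + S)) x = rdot (x *m S) x.
Proof. by rewrite mulmxDr mul_mx_scalar rdotDl rdot_imag_self add0r. Qed.

Lemma rdot_shift_sqr x : ctrmx S = S ->
  rdot (x *m ((0 +i* om)%:M + S)) (x *m ((0 +i* om)%:M + S)) =
  om ^+ 2 * rdot x x + rdot (x *m S) (x *m S).
Proof.
move=> hS; rewrite mulmxDr mul_mx_scalar rdotDl !rdotDr rdot_imag2.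
by rewrite (rdotC ((0 +i* om) *: x)) rdot_imag_hermitian // addr0 add0r.
Qed.

Lemma shift_unitmx : (forall x, x != 0 -> 0 < rdot (x *m S) x) ->
  (0 +i* om)%:M + S \in unitmx.
Proof.
move=> posS; rewrite -row_free_unit -kermx_eq0; apply/eqP/row_matrixP => i.
set x := row i _; rewrite row0; apply: contraTeq isT => xn0.
have : x *m ((0 +i* om)%:M + S) = 0 by apply/sub_kermxP; rewrite row_sub.
move/(congr1 (fun z => rdot z x)); rewrite rdot_shift_form rdot0l => /eqP.
by rewrite gt_eqF ?posS.
Qed.

End ImaginaryShift.

Lemma rdot_diagR_ge k (d : 'I_k -> Rl) (mu : Rl) (x : 'rV[C]_k) :
  (forall i, mu <= d i) -> mu * rdot x x <= rdot (x *m cmx (diagR d)) x.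
Proof.
move=> hd; rewrite rdot_diagR rdotE mulr_sumr; apply: ler_sum => i _.
exact: (ler_wpM2r (cnorm2_ge0 _) (hd i)).
Qed.

(* Expand [<(t - u / lH) A, t - u / lH> >= 0] with [u = tA]. *)
Lemma rdot_sqr_le_form k (A : 'M[C]_k) (lH : Rl) (t : 'rV[C]_k) :
  ctrmx A = A -> 0 < lH -> (forall x, 0 <= rdot (x *m A) x) ->
  (forall x, rdot (x *m A) x <= lH * rdot x x) ->
  rdot (t *m A) (t *m A) <= lH * rdot (t *m A) t.
Proof.
move=> hA lH0 psdA hlH; set u := t *m A; set d := lH^-1.
have huA : rdot (u *m A) t = rdot u u by rewrite rdot_mulmx hA.
have := psdA (t + (- d)%:C *: u).
rewrite mulmxDl -scalemxAl -/u rdotDl !rdotDr !rdotZl !rdotZr huA.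
have d0 : 0 < d by rewrite invr_gt0.
have dlH : d * lH = 1 by rewrite mulVf ?gt_eqF.
have : d * d * rdot (u *m A) u <= d * rdot u u.
  rewrite -mulrA ler_pM2l //; apply: le_trans (ler_wpM2l (ltW d0) (hlH u)) _.
  by rewrite mulrA dlH mul1r.
have : lH * (d * rdot u u) = rdot u u by rewrite mulrA (mulrC lH) dlH mul1r.
nra.
Qed.

Section Incidence.
Variables (n m : nat) (src dst : 'I_m -> 'I_n).
Hypothesis no_loop : forall l, src l != dst l.

Lemma mul_incidence (z : 'rV[Rl]_n) l :
  (z *m incidence src dst) 0 l = z 0 (src l) - z 0 (dst l).
Proof.
have dst_src : dst l != src l by rewrite eq_sym.
rewrite mxE (bigD1 (src l)) //= (bigD1 (dst l)) //= big1 ?addr0.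
  by rewrite !mxE eqxx (negbTE dst_src) eqxx mulr1 mulrN1.
by move=> i /andP [/negbTE ni_src /negbTE ni_dst]; rewrite !mxE ni_src ni_dst mulr0.
Qed.

Lemma incidence_ker_const (z : 'rV[Rl]_n) i j :
  connect (adj src dst) i j -> z *m incidence src dst = 0 -> z 0 j = z 0 i.
Proof.
move=> conn_ij zD.
have closed_level : closed (adj src dst) [pred x | z 0 x == z 0 i].
  have edge_eq l : z 0 (src l) = z 0 (dst l).
    by apply/eqP; rewrite -subr_eq0 -mul_incidence zD mxE.
  by move=> x y /existsP [l /orP [] /andP [/eqP <- /eqP <-]]; rewrite !inE edge_eq.
by have := closed_connect closed_level conn_ij; rewrite !inE eqxx => /esym /eqP.
Qed.

End Incidence.

Lemma incidence_rank_tree n (src dst : 'I_n.-1 -> 'I_n) :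
  (0 < n)%N -> is_oriented_tree src dst -> \rank (incidence src dst) = n.-1.
Proof.
move=> n_gt0 [no_loop conn]; apply/eqP; rewrite eqn_leq rank_leq_col /=.
set i0 : 'I_n := Ordinal n_gt0.
have ker_const : (kermx (incidence src dst) <= (const_mx 1 : 'rV[Rl]_n))%MS.
  apply/row_subP => r; set z := row r _.
  have zD : z *m incidence src dst = 0 by apply/sub_kermxP; rewrite row_sub.
  have -> : z = z 0 i0 *: const_mx 1.
    apply/rowP => j; rewrite [RHS]mxE [const_mx _ _ _]mxE mulr1.
    exact: (@incidence_ker_const _ _ _ _ no_loop z i0 j (conn i0 j) zD).
  exact: scalemx_sub.
have := leq_trans (mxrankS ker_const) (rank_leq_row _).
rewrite mxrank_ker leq_subLR; move: (\rank _) => r.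
by rewrite -subn1 leq_subLR addnC.
Qed.

Lemma cmx_diagR_mulV k (d : 'I_k -> Rl) : (forall i, d i != 0) ->
  cmx (diagR d) *m cmx (diagR (fun i => (d i)^-1)) = 1%:M.
Proof.
move=> d_neq0; rewrite -cmxM diagRM; apply/matrixP => i j; rewrite !mxE.
by case: (i == j); rewrite ?divff ?rmorph1 ?rmorph0.
Qed.

Lemma diagR_unitmx k (d : 'I_k -> Rl) :
  (forall i, d i != 0) -> cmx (diagR d) \in unitmx.
Proof. by move/cmx_diagR_mulV/mulmx1_unit => []. Qed.

Lemma L1_coef_le (sw sv lam a W2 : Rl) : 0 < lam -> 0 < a -> a <= W2 ->
  (sw ^+ 2 + sv ^+ 2 * lam * W2) / (lam * (W2 * W2)) * a ^+ 2 <= sw ^+ 2 / lam + sv ^+ 2 * a.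
Proof.
move=> lam_gt0 a_gt0 a_le; have W2_gt0 := lt_le_trans a_gt0 a_le.
rewrite mulrAC ler_pdivrMr ?mulr_gt0 //.
have -> : (sw ^+ 2 / lam + sv ^+ 2 * a) * (lam * (W2 * W2)) =
          sw ^+ 2 * (W2 * W2) + sv ^+ 2 * a * lam * (W2 * W2).
  by field; rewrite gt_eqF.
have : 0 <= sw ^+ 2 * (W2 * W2 - a * a).
  by rewrite mulr_ge0 ?sqr_ge0 // subr_ge0; apply: (ler_pM (ltW a_gt0) (ltW a_gt0) a_le a_le).
have : 0 <= sv ^+ 2 * lam * (a * W2) * (W2 - a).
  apply: mulr_ge0; last by rewrite subr_ge0.
  apply: mulr_ge0; first by apply: mulr_ge0; [exact: sqr_ge0 | exact: ltW].
  by apply: mulr_ge0; exact: ltW.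
rewrite expr2; nra.
Qed.

Lemma L2_coef_le (sw sv lH a b p : Rl) :
  0 < lH -> 0 < a -> a <= b -> ((a ^+ 2)^-1) ^+ 2 <= lH * p ->
  (sw ^+ 2 + sv ^+ 2 * lH * b * a) / (lH * b ^+ 3 * a) <= sw ^+ 2 * p + sv ^+ 2 * (a ^+ 2)^-1.
Proof.
move=> lH_gt0 a_gt0 a_le p_ge; have b_gt0 := lt_le_trans a_gt0 a_le.
have -> : (sw ^+ 2 + sv ^+ 2 * lH * b * a) / (lH * b ^+ 3 * a) =
          sw ^+ 2 * (lH * b ^+ 3 * a)^-1 + sv ^+ 2 * (b ^+ 2)^-1.
  by field; rewrite !gt_eqF.
apply: lerD; apply: (ler_wpM2l (sqr_ge0 _)); last first.
  by rewrite lef_pV2 ?posrE ?exprn_gt0 // ler_pXn2r // nnegrE ltW.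
rewrite -(ler_pM2l lH_gt0); apply: le_trans p_ge.
have -> : lH * (lH * b ^+ 3 * a)^-1 = (b ^+ 3 * a)^-1 by field; rewrite !gt_eqF.
rewrite exprVn -exprM lef_pV2 ?posrE ?mulr_gt0 ?exprn_gt0 //.
by rewrite (exprSr _ 3) ler_pM2r // ler_pXn2r // nnegrE ltW.
Qed.

Section TreeSystem.
Variables (m : nat) (src dst : 'I_m.+1 -> 'I_m.+2) (w : 'I_m.+1 -> Rl)
  (eps : 'I_m.+2 -> Rl) (sw sv : Rl).
Hypothesis tree : @is_oriented_tree m.+2 src dst.
Hypothesis w_gt0 : forall l, 0 < w l.
Hypothesis eps_gt0 : forall i, 0 < eps i.

Local Notation D := (@Dtau m.+2 src dst).
Local Notation L := (@Les m.+2 src dst eps).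
Local Notation W := (@Wm m.+2 w).
Local Notation Wh := (@Whalf m.+2 w).
Local Notation Eh := (@Einvhalf m.+2 eps).
Local Notation lmin := (lambda_min L).
Local Notation lmax := (lambda_max L).
Local Notation wmin := (lambda_min Wh).
Local Notation wmax := (lambda_max Wh).

Lemma Les_tr : L^T = L.
Proof. by rewrite /Les !trmx_mul trmxK /Einv tr_diag_mx mulmxA. Qed.

Lemma Les_rayleigh x : lmin * rdot x x <= rdot (x *m cmx L) x <= lmax * rdot x x.
Proof. by have [_ _] := symmetric_lambda_spec Les_tr. Qed.

Lemma rdot_Les x :
  rdot (x *m cmx L) x = rdot (x *m cmx D^T *m cmx (Einv eps)) (x *m cmx D^T).
Proof. by rewrite /Les !cmxM !mulmxA rdot_mulmx ctrmx_cmx. Qed.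

Lemma Les_lambda_min_gt0 : 0 < lmin.
Proof.
have [emin _ _] := symmetric_lambda_spec Les_tr.
move: emin; rewrite -eigenvalue_cmx => /eigenvalueP [v hv vn0].
have vD_neq0 : v *m cmx D^T != 0.
  rewrite mulmx_free_eq0 // /row_free mxrank_map mxrank_tr incidence_rank_tree //.
have [i0 Einv_min] := diagR_lambda_min_attained (fun i => (eps i)^-1).
have Einv_lb i : (eps i0)^-1 <= (eps i)^-1.
  by rewrite -Einv_min; case/andP: (diagR_lambda_bounds (fun i => (eps i)^-1) i).
have : 0 < rdot (v *m cmx L) v.
  rewrite rdot_Les; apply: lt_le_trans (rdot_diagR_ge _ Einv_lb).
  by rewrite mulr_gt0 ?invr_gt0 ?rdot_gt0.
by rewrite hv rdotZl pmulr_lgt0 // rdot_gt0.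
Qed.

Lemma Whalf_bounds l : wmin <= Num.sqrt (w l) <= wmax.
Proof. exact: diagR_lambda_bounds. Qed.

Lemma wmin_gt0 : 0 < wmin.
Proof.
by have [l ->] := diagR_lambda_min_attained (fun l => Num.sqrt (w l)); rewrite sqrtr_gt0.
Qed.

Lemma Whalf_sqr : Wh *m Wh = W.
Proof.
by rewrite /Whalf diagRM; congr diagR; apply: funext => l; rewrite -expr2 sqr_sqrtr ?ltW.
Qed.

Lemma rdot_Whalf (z : 'rV[C]_m.+1) :
  rdot (z *m cmx Wh) (z *m cmx Wh) = rdot (z *m cmx W) z.
Proof. by rewrite rdot_cmx_sqr tr_diag_mx Whalf_sqr. Qed.

Lemma rdot_Wm_ge (z : 'rV[C]_m.+1) : wmin ^+ 2 * rdot z z <= rdot (z *m cmx W) z.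
Proof.
apply: rdot_diagR_ge => l; rewrite -[w l](sqr_sqrtr (ltW (w_gt0 l))).
rewrite ler_pXn2r // ?nnegrE ?sqrtr_ge0 ?(ltW wmin_gt0) //.
by case/andP: (Whalf_bounds l).
Qed.

Lemma Einvhalf_sqr : Eh *m Eh^T = Einv eps.
Proof.
rewrite tr_diag_mx diagRM; congr diagR; apply: funext => i.
by rewrite -expr2 exprVn sqr_sqrtr ?ltW.
Qed.

Local Notation B := (row_mx (sw *: (D^T *m Eh)) (- sv *: (L *m Wh))).

Lemma rdot_input (u : 'rV[C]_m.+1) :
  rdot (u *m cmx B) (u *m cmx B) =
  sw ^+ 2 * rdot (u *m cmx L) u + sv ^+ 2 * rdot (u *m cmx (L *m Wh)) (u *m cmx (L *m Wh)).
Proof.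
rewrite cmx_row_mx mul_mx_row rdot_row_mx !cmxZ -!scalemxAr !rdot_scale2 sqrrN.
by rewrite rdot_cmx_sqr trmx_mul trmxK mulmxA -(mulmxA _ Eh) Einvhalf_sqr.
Qed.

Local Notation S := (Wh *m L *m Wh).

Lemma S_hermitian : ctrmx (cmx S) = cmx S.
Proof. by rewrite ctrmx_cmx trmx_mul [(Wh *m L)^T]trmx_mul tr_diag_mx Les_tr mulmxA. Qed.

Lemma rdot_S_ge (t : 'rV[C]_m.+1) : lmin * wmin ^+ 2 * rdot t t <= rdot (t *m cmx S) t.
Proof.
have -> : rdot (t *m cmx S) t = rdot (t *m cmx Wh *m cmx L) (t *m cmx Wh).
  by rewrite !cmxM !mulmxA rdot_mulmx ctrmx_cmx tr_diag_mx.
apply: le_trans (proj1 (andP (Les_rayleigh _))).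
rewrite -mulrA rdot_Whalf.
exact: (ler_wpM2l (ltW Les_lambda_min_gt0) (rdot_Wm_ge _)).
Qed.

Local Notation X om := ((0 +i* om)%:M + cmx (L *m W)).
Local Notation Y om := ((0 +i* om)%:M + cmx S).

Lemma Y_unitmx om : Y om \in unitmx.
Proof.
apply: shift_unitmx => t tn0; apply: lt_le_trans (rdot_S_ge t).
by rewrite !mulr_gt0 ?exprn_gt0 ?Les_lambda_min_gt0 ?wmin_gt0 ?rdot_gt0.
Qed.

Lemma Whalf_similar om : cmx Wh *m X om = Y om *m cmx Wh.
Proof.
rewrite mulmxDr mulmxDl mul_mx_scalar mul_scalar_mx; congr (_ + _).
by rewrite -!cmxM -Whalf_sqr !mulmxA.
Qed.

Lemma Whalf_unitmx : cmx Wh \in unitmx.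
Proof. by apply: diagR_unitmx => l; rewrite gt_eqF ?sqrtr_gt0. Qed.

Lemma X_unitmx om : X om \in unitmx.
Proof.
have := unitmx_mul (cmx Wh) (X om).
by rewrite Whalf_similar unitmx_mul Y_unitmx Whalf_unitmx /= => <-.
Qed.

Local Notation Sig om := (@Sigma_tau m.+2 src dst w eps sw sv om).

Lemma Sigma_tauE om : Sig om = invmx (X om) *m cmx B.
Proof. by []. Qed.

Lemma rdot_Sigma_tau_resolvent om (t : 'rV[C]_m.+1) :
  let y := t *m Y om *m cmx Wh in
  rdot (y *m Sig om) (y *m Sig om) =
  sw ^+ 2 * rdot (t *m cmx S) t + sv ^+ 2 * rdot (t *m cmx S) (t *m cmx S).
Proof.
rewrite /= Sigma_tauE mulmxA.
have -> : t *m Y om *m cmx Wh *m invmx (X om) = t *m cmx Wh.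
  by rewrite -(mulmxA t) -Whalf_similar mulmxA mulmxK ?X_unitmx.
have tS : t *m cmx Wh *m cmx (L *m Wh) = t *m cmx S by rewrite -mulmxA -cmxM mulmxA.
have tSt : rdot (t *m cmx Wh *m cmx L) (t *m cmx Wh) = rdot (t *m cmx S) t.
  by rewrite rdotC rdot_mulmx ctrmx_cmx tr_diag_mx rdotC -tS -(mulmxA _ (cmx L)) -cmxM.
by rewrite rdot_input tS tSt.
Qed.

Local Notation U := ((sw ^+ 2 + sv ^+ 2 * lmin * wmin ^+ 2) / (lmin * wmin ^+ 4)).

Lemma Sigma_tau_rdot_le om y : rdot (y *m Sig om) (y *m Sig om) <= U * rdot y y.
Proof.
set t := y *m invmx (cmx Wh) *m invmx (Y om).
have -> : y = t *m Y om *m cmx Wh by rewrite /t !mulmxKV ?Y_unitmx ?Whalf_unitmx.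
rewrite rdot_Sigma_tau_resolvent.
set a := rdot (t *m cmx S) t; set b := rdot (t *m cmx S) (t *m cmx S).
set mu := lmin * wmin ^+ 2.
have mu_gt0 : 0 < mu by rewrite mulr_gt0 ?exprn_gt0 ?Les_lambda_min_gt0 ?wmin_gt0.
have norm_y : wmin ^+ 2 * b <= rdot (t *m Y om *m cmx Wh) (t *m Y om *m cmx Wh).
  rewrite rdot_Whalf; apply: le_trans (rdot_Wm_ge _).
  rewrite rdot_shift_sqr ?S_hermitian // ler_wpM2l ?sqr_ge0 // lerDr.
  by rewrite mulr_ge0 ?sqr_ge0 ?rdot_ge0.
have a_le : a <= mu^-1 * b.
  by rewrite ler_pdivlMl //; apply: rdot_form_le_sqr (ltW mu_gt0) (rdot_S_ge t).
have eU : U * wmin ^+ 2 = sw ^+ 2 * mu^-1 + sv ^+ 2.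
  by rewrite /mu; field; rewrite !gt_eqF ?exprn_gt0 ?Les_lambda_min_gt0 ?wmin_gt0.
have U_ge0 : 0 <= U.
  rewrite -(pmulr_lge0 _ (exprn_gt0 2 wmin_gt0)) eU.
  by rewrite addr_ge0 ?sqr_ge0 // mulr_ge0 ?sqr_ge0 // invr_ge0 ltW.
apply: le_trans (ler_wpM2l U_ge0 norm_y); rewrite mulrA eU mulrDl lerD2r.
rewrite -(mulrA (sw ^+ 2)); exact: (ler_wpM2l (sqr_ge0 sw) a_le).
Qed.

Lemma X0E : X 0 = cmx (L *m W).
Proof. by rewrite (_ : 0 +i* 0 = 0) // raddf0 add0r. Qed.

Lemma Sigma_tau0_mulmx (t : 'rV[C]_m.+1) : t *m cmx (L *m W) *m Sig 0 = t *m cmx B.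
Proof. by rewrite Sigma_tauE X0E mulmxA mulmxK // -X0E X_unitmx. Qed.

Local Notation L1 := ((sw ^+ 2 + sv ^+ 2 * lmin * wmax ^+ 2) / (lmin * wmax ^+ 4)).

Lemma Sigma_tau0_lower1 : L1 <= sigma_max (Sig 0) ^+ 2.
Proof.
have [emin _ _] := symmetric_lambda_spec Les_tr.
move: emin; rewrite -eigenvalue_cmx => /eigenvalueP [v hv vn0].
have lmin_gt0 := Les_lambda_min_gt0.
set t := (lmin^-1)%:C *: v.
have tL : t *m cmx L = v.
  by rewrite -scalemxAl hv scalerA -rmorphM mulVf ?gt_eqF // scale1r.
have y_neq0 : v *m cmx W != 0.
  by rewrite mulmx_free_eq0 // row_free_unit diagR_unitmx // => l; rewrite gt_eqF.
apply: (sigma_max_sqr_ge y_neq0).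
have -> : v *m cmx W *m Sig 0 = t *m cmx B.
  by rewrite -tL -(mulmxA t) -cmxM Sigma_tau0_mulmx.
rewrite rdot_input tL cmxM mulmxA tL rdot_Whalf.
rewrite rdot_diagR_sqr rdot_diagR /t rdotZr rdotE !mulr_sumr -big_split /=.
apply: ler_sum => l _; rewrite mulrA [sw ^+ 2 * (_ * _)]mulrA [sv ^+ 2 * (_ * _)]mulrA -mulrDl.
apply: ler_wpM2r; first exact: cnorm2_ge0.
have [wmin_le le_wmax] := andP (Whalf_bounds l).
have wmax_gt0 : 0 < wmax := lt_le_trans wmin_gt0 (le_trans wmin_le le_wmax).
rewrite (_ : wmax ^+ 4 = wmax ^+ 2 * wmax ^+ 2); last by rewrite -exprD.
apply: L1_coef_le; rewrite ?w_gt0 //.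
by rewrite -[w l](sqr_sqrtr (ltW (w_gt0 l))) ler_pXn2r // ?nnegrE ?sqrtr_ge0 ?(ltW wmax_gt0).
Qed.

Lemma Les_lambda_max_gt0 : 0 < lmax.
Proof.
have /andP [lo hi] := Les_rayleigh 'e_0; rewrite rdot_delta !mulr1 in lo hi.
exact: lt_le_trans Les_lambda_min_gt0 (le_trans lo hi).
Qed.

Local Notation L2 := ((sw ^+ 2 + sv ^+ 2 * lmax * wmax * wmin)
                       / (lmax * wmax ^+ 3 * wmin)).

Lemma Sigma_tau0_lower2 : L2 <= sigma_max (Sig 0) ^+ 2.
Proof.
have [i0 wmin_i0] := diagR_lambda_min_attained (fun l => Num.sqrt (w l)).
set y : 'rV[C]_m.+1 := 'e_i0.
have y_neq0 : y != 0.
  by apply: contra_neq (@oner_neq0 Rl) => y0; rewrite -(rdot_delta i0) -/y y0 rdot0l.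
apply: (sigma_max_sqr_ge y_neq0); rewrite rdot_delta mulr1.
set t := y *m invmx (cmx (L *m W)).
set u := t *m cmx L.
set c := (w i0)^-1.
have ty : t *m cmx (L *m W) = y by rewrite mulmxKV // -X0E X_unitmx.
have uW : u *m cmx W = y by rewrite /u -mulmxA -cmxM.
have u_cy : u = c%:C *: y.
  rewrite -[u]mulmx1 -(cmx_diagR_mulV (d := w)) => [|l]; last by rewrite gt_eqF.
  by rewrite mulmxA uW cmx_diagR /y -rowE row_diag_mx mxE.
have wi0 : w i0 = wmin ^+ 2 by rewrite wmin_i0 sqr_sqrtr ?ltW.
have psdL x : 0 <= rdot (x *m cmx L) x.
  have /andP [+ _] := Les_rayleigh x; apply: le_trans.
  by rewrite mulr_ge0 ?rdot_ge0 // ltW ?Les_lambda_min_gt0.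
have u_sqr : c ^+ 2 <= lmax * rdot u t.
  have <- : rdot u u = c ^+ 2 by rewrite u_cy rdot_scale2 rdot_delta mulr1.
  apply: rdot_sqr_le_form; rewrite ?ctrmx_cmx ?Les_tr ?Les_lambda_max_gt0 //.
  by move=> x; case/andP: (Les_rayleigh x).
rewrite -ty Sigma_tau0_mulmx rdot_input cmxM mulmxA -/u rdot_Whalf uW.
rewrite {2}u_cy rdotZr rdot_delta mulr1 /c wi0.
apply: L2_coef_le; rewrite ?Les_lambda_max_gt0 ?wmin_gt0 -?wi0 //.
by case/andP: (Whalf_bounds i0); rewrite wmin_i0.
Qed.

End TreeSystem.

Local Close Scope complex_scope.
Local Open Scope classical_set_scope.

Lemma sup_image_sqr_bounds (R : realType) (T : Type) (f : T -> R) (x0 : T) (a b : R) :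
  (forall x, 0 <= f x) -> (forall x, f x ^+ 2 <= b) -> a <= f x0 ^+ 2 ->
  has_ubound [set f x | x in setT] /\ a <= sup [set f x | x in setT] ^+ 2 <= b.
Proof.
move=> f_ge0 f_le a_le.
have b_ge0 : 0 <= b := le_trans (sqr_ge0 _) (f_le x0).
have ub : ubound [set f x | x in setT] (Num.sqrt b).
  by move=> _ [x _ <-]; rewrite -ler_sqr ?nnegrE ?sqrtr_ge0 ?sqr_sqrtr.
have has_ub : has_ubound [set f x | x in setT] by exists (Num.sqrt b).
have fx0_le : f x0 <= sup [set f x | x in setT] by apply: ub_le_sup => //; exists x0.
have sup_le : sup [set f x | x in setT] <= Num.sqrt b by apply: ge_sup => //; exists (f x0), x0.
have sup_ge0 := le_trans (f_ge0 x0) fx0_le.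
split=> //; apply/andP; split.
  by apply: le_trans a_le _; rewrite ler_sqr ?nnegrE.
by rewrite -(sqr_sqrtr b_ge0) ler_sqr ?nnegrE ?sqrtr_ge0.
Qed.

Unset Implicit Arguments.

Theorem theorem4 (n : nat) (hn : (2 <= n)%N)
  (src dst : 'I_n.-1 -> 'I_n) (w : 'I_n.-1 -> Rl) (eps : 'I_n -> Rl)
  (sw sv : Rl) :
  is_oriented_tree src dst ->
  (forall l, 0 < w l) -> (forall i, 0 < eps i) ->
  let lLmin := lambda_min (Les src dst eps) in
  let lLmax := lambda_max (Les src dst eps) in
  let wmax := lambda_max (Whalf w) in
  let wmin := lambda_min (Whalf w) in
  let L1 := (sw ^+ 2 + sv ^+ 2 * lLmin * wmax ^+ 2) / (lLmin * wmax ^+ 4) in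
  let L2 := (sw ^+ 2 + sv ^+ 2 * lLmax * wmax * wmin)
            / (lLmax * wmax ^+ 3 * wmin) in
  let U := (sw ^+ 2 + sv ^+ 2 * lLmin * wmin ^+ 2) / (lLmin * wmin ^+ 4) in
  has_ubound (Hinf_set src dst w eps sw sv) /\
  Num.max L1 L2 <= (Hinf_norm src dst w eps sw sv) ^+ 2 <= U.
Proof.
case: n hn src dst w eps => [|[|m]] // _ src dst w eps tree w_gt0 eps_gt0 /=.
rewrite /Hinf_norm /Hinf_set; apply: (sup_image_sqr_bounds (x0 := 0)).
- by move=> om; have [] := sigma_max_spec (Sigma_tau src dst w eps sw sv om).
- by move=> om; apply: sigma_max_sqr_le; apply: Sigma_tau_rdot_le.
- by rewrite ge_max Sigma_tau0_lower1 ?Sigma_tau0_lower2.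
Qed.
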